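(* Let $p$ be an odd prime, $s\ge1$, and $r\ge3$ an integer dividing $\frac{p^s+1}2$ or $\frac{p^s-1}2$. Let $\lambda=e^{2\pi i/(2r)}$, define $\Delta_0=1$, $\Delta_1=-\lambda-\lambda^{-1}$, $\Delta_{i+1}=\Delta_1\Delta_i-\Delta_{i-1}$ for $i\ge1$, and $\eta^2=-\frac{(\lambda-\lambda^{-1})^2}{2r}$. Then $\Delta_i\equiv(\Delta_i)^{p^s}\pmod p$ for all $i\ge0$, and $\eta^2\equiv(\eta^2)^{p^s}\pmod p$.
   Context: Congruences are modulo $p$ in the ring $\mathbb Z[\tfrac1{2r},\lambda]$. *)

From mathcomp Require Import all_boot all_order all_algebra all_field.
Set Implicit Arguments. Unset Strict Implicit. Unset Printing Implicit Defensive.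
Import Order.TTheory GRing.Theory Num.Theory.
Local Open Scope ring_scope.

(* lambda = e^{2 pi i/(2r)} = e^{i pi / r}: in algC, r.-root (-1) is the r-th
   root of -1 with minimal non-negative argument, i.e. e^{i pi/r}. *)
Definition lam (r : nat) : algC := r.-root (-1).

Fixpoint Delta (r : nat) (i : nat) : algC :=
  match i with
  | 0 => 1
  | 1 => - lam r - (lam r)^-1
  | (j.+1) as k => (- lam r - (lam r)^-1) * Delta r j -
                   (match j with 0 => 0 | j'.+1 => Delta r j' end)
  end.

Definition eta2 (r : nat) : algC := - (lam r - (lam r)^-1) ^+ 2 / (2 * r)%:R.

Definition inZlam (r : nat) (x : algC) : Prop :=
  exists (m : nat) (P : {poly int}),
    x = (map_poly (fun z : int => z%:~R) P).[lam r] / ((2 * r)%:R) ^+ m.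

(* x = y mod p in the ring Z[1/(2r), lam] *)
Definition congr_mod (r p : nat) (x y : algC) : Prop :=
  exists z : algC, inZlam r z /\ x - y = p%:R * z.

From mathcomp Require Import all_boot all_order all_algebra all_field.
From mathcomp Require Import ring zify.
Set Implicit Arguments. Unset Strict Implicit. Unset Printing Implicit Defensive.
Import Order.TTheory GRing.Theory Num.Theory.
Local Open Scope ring_scope.

(* For q = p^s, the map x |-> x^q is additive modulo p on any subring
   (binomial coefficients C(p, i), 0 < i < p, are divisible by p), so the
   elements with x^q = x mod p form a subring; it contains every n%:R, hence
   1/(2r) as well.  The divisibility hypothesis gives 2r | q + 1 or 2r | q - 1,
   i.e. lambda^q = lambda^-1 or lambda, so lambda^k + lambda^-k is fixed.  Every
   Delta_i is an integer polynomial in Delta_1 = -(lambda + lambda^-1), and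
   eta^2 = -(lambda^2 + lambda^-2 - 2) / (2r). *)

(* Membership in Z[1/(2r), lambda] is an existential Prop, not a boolean
   predicate, so subrings are Prop-valued here instead of MathComp's
   subringClosed predicates. *)
Record prop_subring (R : pzRingType) := PropSubring {
  in_subring :> R -> Prop;
  subring1 : in_subring 1;
  subringB : forall x y, in_subring x -> in_subring y -> in_subring (x - y);
  subringM : forall x y, in_subring x -> in_subring y -> in_subring (x * y) }.

Section SubringClosure.
Variables (R : pzRingType) (S : prop_subring R).

Lemma subring0 : S 0.
Proof. by rewrite -(subrr 1); apply: subringB; apply: subring1. Qed.

Lemma subringN x : S x -> S (- x).
Proof. by move=> Sx; rewrite -sub0r; apply: subringB => //; apply: subring0. Qed.

Lemma subringD x y : S x -> S y -> S (x + y).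
Proof. by move=> Sx Sy; rewrite -[y]opprK; apply/subringB/subringN. Qed.

Lemma subringX x n : S x -> S (x ^+ n).
Proof.
move=> Sx; elim: n => [|n IHn]; first by rewrite expr0; apply: subring1.
by rewrite exprS; apply: subringM.
Qed.

Lemma subringMn x n : S x -> S (x *+ n).
Proof.
move=> Sx; elim: n => [|n IHn]; first by rewrite mulr0n; apply: subring0.
by rewrite mulrS; apply: subringD.
Qed.

Lemma subring_sum (I : finType) (F : I -> R) :
  (forall i, S (F i)) -> S (\sum_i F i).
Proof. by move=> SF; apply: big_ind => //; [apply: subring0 | apply: subringD]. Qed.

End SubringClosure.

Lemma sum_binomial_modp (V : nmodType) (p : nat) (F : nat -> V) : prime p ->
  \sum_(i < p.+1) F i *+ ('C(p, i) %% p) = F 0%N + F p.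
Proof.
move=> p_pr; have p_gt1 := prime_gt1 p_pr.
rewrite -(big_mkord xpredT (fun i => F i *+ ('C(p, i) %% p))).
rewrite big_ltn // big_nat_recr /= ?(ltnW p_gt1) // big_nat big1 => [|i /andP[i_gt0 i_ltp]].
  by rewrite bin0 binn modn_small // add0r !mulr1n.
by rewrite (eqP (prime_dvd_bin p_pr _)) ?mulr0n ?i_gt0.
Qed.

Section Congruence.
Variables (R : comUnitRingType) (S : prop_subring R) (p : nat).

Definition modeq (x y : R) := exists z, S z /\ x - y = p%:R * z.

Lemma modeq_refl x : modeq x x.
Proof. by exists 0; split; [apply: subring0 | rewrite subrr mulr0]. Qed.

Lemma modeq_sym x y : modeq x y -> modeq y x.
Proof. by case=> z [Sz e]; exists (- z); split; [apply: subringN | rewrite mulrN -e opprB]. Qed.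

Lemma modeq_trans y x w : modeq x y -> modeq y w -> modeq x w.
Proof.
case=> z1 [S1 e1] [z2 [S2 e2]]; exists (z1 + z2); split; first exact: subringD.
by rewrite mulrDr -e1 -e2 addrA subrK.
Qed.

Lemma modeqB x1 y1 x2 y2 :
  modeq x1 y1 -> modeq x2 y2 -> modeq (x1 - x2) (y1 - y2).
Proof.
case=> z1 [S1 e1] [z2 [S2 e2]]; exists (z1 - z2); split; first exact: subringB.
by rewrite mulrBr -e1 -e2; ring.
Qed.

Lemma modeqM x1 y1 x2 y2 : S y1 -> S x2 ->
  modeq x1 y1 -> modeq x2 y2 -> modeq (x1 * x2) (y1 * y2).
Proof.
move=> Sy1 Sx2 [z1 [S1 e1]] [z2 [S2 e2]]; exists (z1 * x2 + y1 * z2); split.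
  by apply: subringD; apply: subringM.
have -> : x1 * x2 - y1 * y2 = (x1 - y1) * x2 + y1 * (x2 - y2) by ring.
by rewrite e1 e2; ring.
Qed.

Lemma modeqX x y n : S x -> S y -> modeq x y -> modeq (x ^+ n) (y ^+ n).
Proof.
move=> Sx Sy xy; elim: n => [|n IHn]; first exact: modeq_refl.
by rewrite !exprS; apply: modeqM => //; apply: subringX.
Qed.

Hypothesis p_pr : prime p.

Lemma modeq_frobenius x y : S x -> S y -> modeq ((x + y) ^+ p) (x ^+ p + y ^+ p).
Proof.
move=> Sx Sy; pose F i := x ^+ (p - i) * y ^+ i.
exists (\sum_(i < p.+1) F i *+ ('C(p, i) %/ p)); split.
  by apply: subring_sum => i; apply/subringMn/subringM; apply: subringX.
rewrite exprDn (eq_bigr (fun i : 'I_p.+1 =>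
  p%:R * (F i *+ ('C(p, i) %/ p)) + F i *+ ('C(p, i) %% p))) => [|i _]; last first.
  by rewrite {1}(divn_eq 'C(p, i) p) mulrnDr mulrnA mulr_natl.
rewrite big_split /= sum_binomial_modp // /F subn0 subnn !expr0 mulr1 mul1r.
by rewrite addrK mulr_sumr.
Qed.

Lemma modeq_frobeniusX s x y : S x -> S y ->
  modeq ((x + y) ^+ (p ^ s)) (x ^+ (p ^ s) + y ^+ (p ^ s)).
Proof.
move=> Sx Sy; elim: s => [|s IHs]; first by rewrite expn0 !expr1; apply: modeq_refl.
rewrite expnSr !exprM.
apply: modeq_trans (modeq_frobenius (subringX _ Sx) (subringX _ Sy)).
by apply: modeqX => //; [apply/subringX/subringD | apply: subringD; apply: subringX].
Qed.

Variable s : nat.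

Definition frob_fixed x := S x /\ modeq (x ^+ (p ^ s)) x.

Lemma frob_fixed1 : frob_fixed 1.
Proof. by split; [apply: subring1 | rewrite expr1n; apply: modeq_refl]. Qed.

(* Frobenius applied to (x - y) + y; no parity of p is needed. *)
Lemma frob_fixedB x y : frob_fixed x -> frob_fixed y -> frob_fixed (x - y).
Proof.
move=> [Sx fx] [Sy fy]; have Sxy := subringB Sx Sy; split => //.
have frobD := modeq_frobeniusX s Sxy Sy; rewrite subrK in frobD.
rewrite -[_ ^+ _](addrK (y ^+ (p ^ s))).
apply: modeq_trans (modeqB (modeq_sym frobD) (modeq_refl _)) _.
exact: modeqB.
Qed.

Lemma frob_fixedM x y : frob_fixed x -> frob_fixed y -> frob_fixed (x * y).
Proof.
move=> [Sx fx] [Sy fy]; split; first exact: subringM.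
by rewrite exprMn; apply: modeqM => //; apply: subringX.
Qed.

Lemma frob_fixed0 : frob_fixed 0.
Proof. by rewrite -(subrr 1); apply: frob_fixedB; apply: frob_fixed1. Qed.

Lemma frob_fixedN x : frob_fixed x -> frob_fixed (- x).
Proof. by rewrite -sub0r; apply: frob_fixedB frob_fixed0. Qed.

Lemma frob_fixedD x y : frob_fixed x -> frob_fixed y -> frob_fixed (x + y).
Proof. by move=> fx fy; rewrite -[y]opprK; apply/frob_fixedB/frob_fixedN. Qed.

Lemma frob_fixed_nat n : frob_fixed n%:R.
Proof.
elim: n => [|n IHn]; first exact: frob_fixed0.
by rewrite -addn1 natrD; apply: frob_fixedD IHn frob_fixed1.
Qed.

(* u^-1^q - u^-1 = u^-1^(q+1) * (u - u^q) *)
Lemma frob_fixedV u : u \is a GRing.unit -> S u^-1 ->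
  frob_fixed u -> frob_fixed u^-1.
Proof.
move=> u_unit SuV [Su fu]; split => //.
pose w := u^-1 ^+ (p ^ s).+1.
have wuE : w * u = u^-1 ^+ (p ^ s) by rewrite /w exprSr mulrVK.
have wuqE : w * u ^+ (p ^ s) = u^-1.
  by rewrite /w exprS -mulrA exprVn mulVr ?mulr1 // unitrX.
rewrite -[X in modeq _ X]wuqE -wuE.
by apply: (modeqM _ Su (modeq_refl w) (modeq_sym fu)); apply: subringX.
Qed.

Lemma frob_fixed_addV u : u \is a GRing.unit -> S u -> S u^-1 ->
  u ^+ (p ^ s) = u^-1 \/ u ^+ (p ^ s) = u -> frob_fixed (u + u^-1).
Proof.
move=> u_unit Su SuV uq; split; first exact: subringD.
apply: modeq_trans (modeq_frobeniusX s Su SuV) _.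
rewrite exprVn; case: uq => ->; last exact: modeq_refl.
by rewrite invrK addrC; apply: modeq_refl.
Qed.

End Congruence.

Section Cyclotomic.
Variable r : nat.
Hypothesis r_gt0 : (0 < r)%N.
Local Notation lam := (lam r).
Local Notation N := ((2 * r)%:R : algC).

Lemma lam_expr : lam ^+ r = -1.
Proof. exact: rootCK. Qed.

Lemma lam_neq0 : lam != 0.
Proof.
apply/eqP=> lam0; move: lam_expr; rewrite lam0 expr0n gtn_eqF //= => /eqP.
by rewrite eq_sym oppr_eq0 oner_eq0.
Qed.

Lemma lamV : lam^-1 = - lam ^+ r.-1.
Proof.
apply: (mulIf lam_neq0); rewrite mulVf ?lam_neq0 // mulNr -exprSr prednK //.
by rewrite lam_expr opprK.
Qed.

Lemma lamX_eq1 n : (2 * r %| n)%N -> lam ^+ n = 1.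
Proof.
by case/dvdnP=> k ->; rewrite mulnC [(2 * r)%N]mulnC !exprM lam_expr sqrrN !expr1n.
Qed.

Lemma lamX_half_dvd q : odd q ->
  ((r %| (q + 1) %/ 2) || (r %| (q - 1) %/ 2))%N ->
  lam ^+ q = lam^-1 \/ lam ^+ q = lam.
Proof.
move=> q_odd; have q_mod2 : (q %% 2 = 1)%N by rewrite modn2 q_odd.
case/orP=> /dvdnP[k qE]; [left | right].
  rewrite -[lam^-1]div1r; apply: (canRL (mulfK lam_neq0)).
  by rewrite -exprSr lamX_eq1 //; apply/dvdnP; exists k; lia.
have -> : q = (q - 1 + 1)%N by lia.
by rewrite exprD lamX_eq1 ?mul1r //; apply/dvdnP; exists k; lia.
Qed.

Lemma inZlam1 : inZlam r 1.
Proof. by exists 0%N, 1; rewrite rmorph1 hornerC expr0 divr1. Qed.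

Lemma inZlamB x y : inZlam r x -> inZlam r y -> inZlam r (x - y).
Proof.
case=> [m1 [P1 ->]] [m2 [P2 ->]].
exists (m1 + m2)%N, (P1 * ((2 * r) ^ m2)%N%:Z%:P - P2 * ((2 * r) ^ m1)%N%:Z%:P).
have NX_neq0 m : N ^+ m != 0 by rewrite expf_neq0 // pnatr_eq0 muln_eq0 -lt0n r_gt0.
rewrite rmorphB !rmorphM /= !map_polyC hornerD hornerN !hornerM !hornerC /=.
by rewrite -!pmulrn !natrX exprD; field; rewrite !NX_neq0.
Qed.

Lemma inZlamM x y : inZlam r x -> inZlam r y -> inZlam r (x * y).
Proof.
case=> [m1 [P1 ->]] [m2 [P2 ->]]; exists (m1 + m2)%N, (P1 * P2).
by rewrite rmorphM hornerM exprD invfM mulrACA.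
Qed.

(* congr_mod r p is definitionally modeq Zlam p. *)
Definition Zlam : prop_subring algC := PropSubring inZlam1 inZlamB inZlamM.

Lemma Zlam_lam : Zlam lam.
Proof. by exists 0%N, 'X; rewrite map_polyX hornerX expr0 divr1. Qed.

Lemma Zlam_lamV : Zlam lam^-1.
Proof.
exists 0%N, (- 'X^(r.-1)).
by rewrite rmorphN /= map_polyXn hornerN hornerXn expr0 divr1 lamV.
Qed.

Lemma Zlam_invN : Zlam N^-1.
Proof. by exists 1%N, 1; rewrite rmorph1 hornerC expr1 div1r. Qed.

End Cyclotomic.

Section FrobeniusFixed.
Variables r p s : nat.
Hypotheses (r_gt0 : (0 < r)%N) (p_pr : prime p).
Hypothesis lamX : lam r ^+ (p ^ s) = (lam r)^-1 \/ lam r ^+ (p ^ s) = lam r.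
Local Notation fixed := (frob_fixed (Zlam r_gt0) p s).

Lemma frob_fixed_lamX k : fixed (lam r ^+ k + (lam r ^+ k)^-1).
Proof.
have lamkV : (lam r ^+ k)^-1 = (lam r)^-1 ^+ k by rewrite exprVn.
apply: (frob_fixed_addV p_pr).
- by rewrite unitfE expf_neq0 // lam_neq0.
- exact/subringX/Zlam_lam.
- by rewrite lamkV; apply/subringX/Zlam_lamV.
- by rewrite -exprM mulnC exprM lamkV; case: lamX => ->; [left | right].
Qed.

Lemma frob_fixed_Delta i : fixed (Delta r i).
Proof.
have fixed_Delta1 : fixed (Delta r 1).
  by rewrite /= -opprD -[lam r]expr1; apply/(frob_fixedN p_pr)/frob_fixed_lamX.
suff: fixed (Delta r i) /\ fixed (Delta r i.+1) by case.
elim: i => [|i [fi fi1]]; first by split => //; apply: frob_fixed1.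
split=> //; have -> : Delta r i.+2 = Delta r 1 * Delta r i.+1 - Delta r i by [].
by apply: (frob_fixedB p_pr) => //; apply: frob_fixedM.
Qed.

Lemma frob_fixed_eta2 : fixed (eta2 r).
Proof.
have lam_sqrB : (lam r - (lam r)^-1) ^+ 2 = lam r ^+ 2 + (lam r ^+ 2)^-1 - 2%:R.
  by field; rewrite lam_neq0.
rewrite /eta2 lam_sqrB; apply: frob_fixedM.
  apply/(frob_fixedN p_pr)/(frob_fixedB p_pr); first exact: frob_fixed_lamX.
  exact: frob_fixed_nat.
apply: frob_fixedV; last exact: frob_fixed_nat.
  by rewrite unitfE pnatr_eq0 muln_eq0 -lt0n r_gt0.
exact: Zlam_invN.
Qed.

End FrobeniusFixed.

Theorem lemma3 (p s r : nat) :
  prime p -> odd p -> (1 <= s)%N -> (3 <= r)%N ->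
  ((r %| (p ^ s + 1) %/ 2) || (r %| (p ^ s - 1) %/ 2))%N ->
  (forall i : nat, congr_mod r p (Delta r i) (Delta r i ^+ (p ^ s))) /\
  congr_mod r p (eta2 r) (eta2 r ^+ (p ^ s)).
Proof.
move=> p_pr p_odd _ r_ge3 r_dvd.
have r_gt0 : (0 < r)%N by apply: leq_trans r_ge3.
have q_odd : odd (p ^ s) by rewrite oddX p_odd orbT.
have lamX := lamX_half_dvd r_gt0 q_odd r_dvd.
split=> [i|].
  exact: modeq_sym (frob_fixed_Delta r_gt0 p_pr lamX i).2.
exact: modeq_sym (frob_fixed_eta2 r_gt0 p_pr lamX).2.
Qed.
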